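(* Let Alice hold a string $A$ and Bob hold a string $B$, and let $\ell=\mathrm{LCP}(A,B)$. Using a randomized public-coin protocol, they can find a number $\ell'\ge\ell$ such that either (1) $\ell'\le\ell^2$, using $O(\lg\lg\ell)$ rounds and $O(\lg\lg\ell)$ total communication, or (2) $\ell'\le|A|^2$, using $O(1)$ rounds and $O(\lg\lg\lg|A|)$ total communication.
   Context: $\mathrm{LCP}(A,B)$ is the length of the longest common prefix of $A$ and $B$. In the public-coin model the parties share an infinite string of independent unbiased random bits, and the result must be correct with probability at least a fixed constant greater than $1/2$. *)

From mathcomp Require Import all_boot all_algebra.
Set Implicit Arguments. Unset Strict Implicit. Unset Printing Implicit Defensive.
Import GRing.Theory Num.Theory.

Fixpoint lcp (S : eqType) (A B : seq S) : nat :=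
  match A, B with
  | a :: A', b :: B' => if a == b then (lcp A' B').+1 else 0
  | _, _ => 0
  end.

(* lg n = floor(log_2 n) (and 0 for n <= 1). *)
Definition lg (n : nat) : nat := trunc_log 2 n.

(* The shared public random string: infinitely many unbiased bits. *)
Definition rstring := nat -> bool.

Definition transcript := seq (seq bool).

(* A protocol: Alice speaks in rounds 0,2,4,..., Bob in rounds 1,3,5,...
   The speaker's next-message function sees its own input, the public random
   string and the transcript so far; returning None means "halt".
   The output is a function of public information only (random string and
   transcript), so both parties know it. *)
Record protocol (S : Type) := Protocol {
  alice_msg : seq S -> rstring -> transcript -> option (seq bool);
  bob_msg   : seq S -> rstring -> transcript -> option (seq bool);
  output    : rstring -> transcript -> nat }.

Fixpoint run_from (S : Type) (P : protocol S) (A B : seq S) (r : rstring)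
    (fuel : nat) (t : transcript) : option transcript :=
  match fuel with
  | 0 => None
  | k.+1 =>
    let m := if odd (size t) then bob_msg P B r t else alice_msg P A r t in
    match m with
    | None => Some t
    | Some x => run_from P A B r k (rcons t x)
    end
  end.

(* Execution allowing at most R rounds (messages): Some t iff the protocol
   halts after at most R messages, with final transcript t. *)
Definition run (S : Type) (P : protocol S) (A B : seq S) (r : rstring)
    (R : nat) : option transcript := run_from P A B r R.+1 [::].

Definition comm (t : transcript) : nat := sumn (map size t).

Definition good (S : Type) (P : protocol S) (A B : seq S) (r : rstring)
    (R K : nat) (ok : nat -> Prop) : Prop :=
  exists t, run P A B r R = Some t /\ comm t <= K /\ ok (output P r t).

(* Pr_r[E r] >= p, witnessed by finitely many cylinder sets: for some N,
   a set of N-bit prefixes of total measure >= p such that every random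
   string extending one of them lies in E. *)
Definition prob_at_least (E : rstring -> Prop) (p : rat) : Prop :=
  exists (N : nat) (T : {set N.-tuple bool}),
    (forall t, t \in T -> forall r : rstring,
        (forall i : 'I_N, r i = tnth t i) -> E r) /\
    (p * (2 ^ N)%:R <= (#|T|)%:R)%R.

From mathcomp Require Import all_boot all_algebra.
From mathcomp Require Import zify lra.
Set Implicit Arguments. Unset Strict Implicit. Unset Printing Implicit Defensive.
Import GRing.Theory Num.Theory.

(** For (2), Alice sends [lg (lg |A|)], which takes [O(lg lg lg |A|)] bits, and
    both parties output [2 ^ 2 ^ (lg (lg |A|) + 1)]; this number lies between
    [|A|] and [|A| ^ 2] because [2 ^ 2 ^ lg (lg n) <= n < 2 ^ 2 ^ (lg (lg n) + 1)].
    For (1), the parties compare the prefixes of lengths [1, 2, 4, 16, ...,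
    2 ^ 2 ^ i, ...] of [A] and [B] in turn: Alice sends a two-bit random linear
    fingerprint of her prefix and Bob stops the protocol as soon as it differs
    from his (or a prefix does not exist).  All prefixes of length at most [l]
    agree, so the protocol runs until the first length exceeding [l], which is
    at most [l ^ 2] since each length is at most the square of the previous
    one, and it reaches this length after [O(lg lg l)] rounds.  It stops there
    unless the fingerprints of two distinct strings collide, which happens
    with probability [1/4]. *)

Lemma lcp_leq_size_l (S : eqType) (A B : seq S) : lcp A B <= size A.
Proof. by elim: A B => [|a A IH] [|b B] //=; case: ifP => // _; apply: IH. Qed.

Lemma lcp_leq_size_r (S : eqType) (A B : seq S) : lcp A B <= size B.
Proof. by elim: A B => [|a A IH] [|b B] //=; case: ifP => // _; apply: IH. Qed.

Lemma take_lcp (S : eqType) (A B : seq S) m : m <= lcp A B -> take m A = take m B.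
Proof.
elim: A B m => [|a A IH] [|b B] [|m] //=; case: ifP => // /eqP -> m_le.
by rewrite (IH B m m_le).
Qed.

Lemma leq_lcp (S : eqType) (A B : seq S) m :
  m <= size A -> m <= size B -> take m A = take m B -> m <= lcp A B.
Proof.
elim: A B m => [|a A IH] [|b B] [|m] //= mA mB [-> eq_take].
by rewrite eqxx; apply: IH.
Qed.

Lemma first_mismatch (S : eqType) (x y : seq S) :
  size x = size y -> x != y ->
  exists p a a' x' y', [/\ x = p ++ a :: x', y = p ++ a' :: y' & a != a'].
Proof.
elim: x y => [|a x IH] [|b y] //= [size_xy] neq_xy.
have [eq_ab|neq_ab] := eqVneq a b; last by exists [::], a, b, x, y.
subst b.
have neq_xy' : x != y by apply: contraNneq neq_xy => ->.
have [p [c [c' [x' [y' [-> -> neq_c]]]]]] := IH y size_xy neq_xy'.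
by exists (a :: p), c, c', x', y'.
Qed.

Lemma exp2_lglg_leq n : 1 < n -> 2 ^ 2 ^ lg (lg n) <= n.
Proof.
move=> n_gt1; have lgn_gt0 : 0 < lg n by rewrite trunc_log_gt0.
apply: leq_trans (@trunc_logP 2 n _ _) => //; last by lia.
by rewrite leq_exp2l // trunc_logP.
Qed.

Lemma ltn_exp2_lglg n : n < 2 ^ 2 ^ (lg (lg n)).+1.
Proof.
apply: leq_trans (@trunc_log_ltn 2 n _) _ => //.
by rewrite leq_exp2l // trunc_log_ltn.
Qed.

Lemma prob_at_least_sure (E : rstring -> Prop) (p : rat) :
  (p <= 1)%R -> (forall r, E r) -> prob_at_least E p.
Proof.
move=> p_le1 E_sure; exists 0, setT; split=> [t _ r _|]; first exact: E_sure.
by rewrite cardsT card_tuple expn0 mulr1.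
Qed.

Lemma prob_at_least_sub (E E' : rstring -> Prop) (p : rat) :
  (forall r, E r -> E' r) -> prob_at_least E p -> prob_at_least E' p.
Proof.
move=> sub_EE' [N [T [T_E card_T]]]; exists N, T; split=> // t t_T r r_t.
exact/sub_EE'/(T_E t t_T).
Qed.

Fixpoint bits (m x : nat) : seq bool :=
  if m is m'.+1 then odd x :: bits m' x./2 else [::].

Fixpoint nat_of_bits (s : seq bool) : nat :=
  if s is b :: s' then b + (nat_of_bits s').*2 else 0.

Lemma size_bits m x : size (bits m x) = m.
Proof. by elim: m x => //= m IH x; rewrite IH. Qed.

Lemma bitsK m x : x < 2 ^ m -> nat_of_bits (bits m x) = x.
Proof.
elim: m x => [|m IH] x /=; first by rewrite expn0 ltnS leqn0 => /eqP ->.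
by rewrite expnS => x_lt; rewrite IH ?odd_double_half // -divn2; lia.
Qed.

(* For [n <= 1] the only admissible estimate is [n] itself, so it is sent as is. *)
Definition size_msg (n : nat) : seq bool :=
  if n <= 1 then [:: false; n == 1]
  else true :: bits (lg (lg (lg n))).+1 (lg (lg n)).

Definition size_estimate (m : seq bool) : nat :=
  match m with
  | [:: false, b & _] => b
  | true :: s => 2 ^ 2 ^ (nat_of_bits s).+1
  | _ => 0
  end.

Lemma size_size_msg n : size (size_msg n) <= 3 * (lg (lg (lg n))).+1.
Proof. by rewrite /size_msg; case: ifP => _ /=; rewrite ?size_bits; lia. Qed.

Lemma size_estimate_msg n :
  1 < n -> size_estimate (size_msg n) = 2 ^ 2 ^ (lg (lg n)).+1.
Proof.
move=> n_gt1; rewrite /size_msg leqNgt n_gt1.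
have lglg_lt : lg (lg n) < 2 ^ (lg (lg (lg n))).+1 by apply: trunc_log_ltn.
by rewrite -[in RHS](bitsK lglg_lt).
Qed.

Lemma size_estimate_bounds n : n <= size_estimate (size_msg n) <= n ^ 2.
Proof.
have [|n_gt1] := leqP n 1; first by case: n => [|[|]].
rewrite size_estimate_msg // ltnW ?ltn_exp2_lglg //=.
by rewrite expnSr expnM leq_exp2r // exp2_lglg_leq.
Qed.

Definition one_message_protocol (Sigma : Type) : protocol Sigma :=
  Protocol (fun A _ t => if t is [::] then Some (size_msg (size A)) else None)
           (fun _ _ _ => None)
           (fun _ t => if t is [:: m] then size_estimate m else 0).

Lemma one_message_good (Sigma : finType) (A B : seq Sigma) r :
  good (one_message_protocol Sigma) A B r 3 (3 * (lg (lg (lg (size A)))).+1)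
       (fun l' => lcp A B <= l' <= size A ^ 2).
Proof.
exists [:: size_msg (size A)]; split; first by [].
rewrite /comm /= addn0; split; first exact: size_size_msg.
have /andP [size_le le_sqr] := size_estimate_bounds (size A).
by rewrite le_sqr (leq_trans (lcp_leq_size_l A B)).
Qed.

Lemma leq_double_card (T : finType) (P Q : {set T}) (f : T -> T) :
  injective f -> P \subset Q -> {in P, forall x, f x \in Q :\: P} ->
  2 * #|P| <= #|Q|.
Proof.
move=> f_inj sub_PQ f_out.
have card_fP : #|f @: P| = #|P| by rewrite card_imset.
have : #|f @: P| <= #|Q :\: P|.
  by apply/subset_leq_card/subsetP => _ /imsetP [x x_P ->]; apply: f_out.
by rewrite cardsD (setIidPr sub_PQ) card_fP; lia.
Qed.

Definition rstring_of N (t : N.-tuple bool) : rstring := nth false t.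

Definition tflip N (c : nat) (t : N.-tuple bool) : N.-tuple bool :=
  [tuple (val i == c) (+) tnth t i | i < N].

Definition flip_coin (c : nat) (r : rstring) : rstring := fun i => (i == c) (+) r i.

Lemma tflipK N c : involutive (@tflip N c).
Proof. by move=> t; apply: eq_from_tnth => i; rewrite !tnth_mktuple addKb. Qed.

Lemma rstring_of_tflip N c (t : N.-tuple bool) :
  c < N -> rstring_of (tflip c t) =1 flip_coin c (rstring_of t).
Proof.
move=> c_lt i; rewrite /rstring_of /flip_coin; have [i_lt|i_ge] := ltnP i N.
  by rewrite -[i]/(val (Ordinal i_lt)) nth_mktuple (tnth_nth false).
by rewrite !nth_default ?size_tuple //; case: eqP => // i_c; lia.
Qed.

Section Fingerprint.

Variable Sigma : finType.

(* Every triple (fingerprint bit [b], position [k], letter [x]) owns a public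
   coin, so [hash r b 0 s] is a uniformly random linear form over GF(2)
   evaluated at the indicator vector of [s]. *)
Definition coin_index (b : bool) (k : nat) (x : Sigma) : nat :=
  b + (k * #|Sigma| + enum_rank x).*2.

Lemma coin_index_lt b k x M : k < M -> coin_index b k x < (M * #|Sigma|).*2.
Proof.
move=> k_lt; have rank_lt : enum_rank x < #|Sigma| := ltn_ord _.
have : k.+1 * #|Sigma| <= M * #|Sigma| by apply: leq_mul.
move: rank_lt; rewrite /coin_index mulSn -!muln2; set K := #|Sigma|.
by case: b => /=; lia.
Qed.

Lemma eq_coin_index b k x b' k' x' :
  (coin_index b k x == coin_index b' k' x') = [&& b == b', k == k' & x == x'].
Proof.
apply/eqP/and3P => [eq_ix|[/eqP -> /eqP -> /eqP ->] //].
have eq_b : b = b'.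
  by have := congr1 odd eq_ix; rewrite !oddD !odd_double !addbF !oddb.
have := congr1 half eq_ix; rewrite !half_bit_double => eq_half.
have Sigma_gt0 : 0 < #|Sigma| by apply: leq_ltn_trans (ltn_ord (enum_rank x)).
have := congr1 (divn^~ #|Sigma|) eq_half; have := congr1 (modn^~ #|Sigma|) eq_half.
rewrite /= !modnMDl !modn_small ?ltn_ord // !divnMDl // !divn_small ?ltn_ord //.
by rewrite !addn0 => /val_inj/enum_rank_inj -> ->; rewrite eq_b !eqxx.
Qed.

Fixpoint hash (r : rstring) (b : bool) (j : nat) (s : seq Sigma) : bool :=
  if s is x :: s' then r (coin_index b j x) (+) hash r b j.+1 s' else false.

Lemma eq_hash r r' b j s :
  (forall k x, j <= k < j + size s -> r (coin_index b k x) = r' (coin_index b k x)) ->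
  hash r b j s = hash r' b j s.
Proof.
elim: s j => [|x s IH] j //= eq_r; rewrite eq_r ?leqnn ?addnS ?ltnS ?leq_addr //.
by rewrite IH // => k y /andP [j_lt k_lt]; apply: eq_r; rewrite ltnW // addnS.
Qed.

Lemma hash_flip_coin r b b0 j p x s a :
  hash (flip_coin (coin_index b0 (j + size p) a) r) b j (p ++ x :: s) =
  ((b == b0) && (x == a)) (+) hash r b j (p ++ x :: s).
Proof.
elim: p j => [|y p IH] j /=.
  rewrite {1}/flip_coin addn0 eq_coin_index eqxx /= addbA; congr (_ (+) _).
  apply: eq_hash => k z /andP [j_lt _].
  by rewrite /flip_coin eq_coin_index (gtn_eqF j_lt) andbF.
rewrite addnS -addSn IH addbCA; congr (_ (+) _).
rewrite /flip_coin eq_coin_index.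
have -> : (j == j.+1 + size p) = false by lia.
by rewrite andbF.
Qed.

Definition fingerprint (r : rstring) (s : seq Sigma) : seq bool :=
  [:: hash r false 0 s; hash r true 0 s].

Lemma eq_fingerprint r r' s M :
  (forall i, i < (M * #|Sigma|).*2 -> r i = r' i) -> size s <= M ->
  fingerprint r s = fingerprint r' s.
Proof.
move=> eq_r s_le; rewrite /fingerprint.
by congr [:: _; _]; apply: eq_hash => k x /andP [_ k_lt];
   apply/eq_r/coin_index_lt/(leq_trans k_lt).
Qed.

Definition fingerprint_collisions N (x y : seq Sigma) : {set N.-tuple bool} :=
  [set t | fingerprint (rstring_of t) x == fingerprint (rstring_of t) y].

(* Flipping the coin of bit [b0] at the first mismatch toggles exactly the
   [b0]-th bit of the fingerprint difference, so each of the four values of the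
   difference is taken by a quarter of the coin tuples. *)
Lemma card_fingerprint_collisions (x y : seq Sigma) :
  size x = size y -> x != y ->
  4 * #|fingerprint_collisions (size x * #|Sigma|).*2 x y| <= 2 ^ (size x * #|Sigma|).*2.
Proof.
move=> size_xy neq_xy; set N := (size x * #|Sigma|).*2.
have [p [a [a' [x' [y' [def_x def_y neq_a]]]]]] := first_mismatch size_xy neq_xy.
have p_lt : size p < size x by rewrite def_x size_cat /= addnS ltnS leq_addr.
pose diff b (t : N.-tuple bool) := hash (rstring_of t) b 0 x (+) hash (rstring_of t) b 0 y.
have diff_tflip b0 b t :
    diff b (tflip (coin_index b0 (size p) a) t) = (b == b0) (+) diff b t.
  set c := coin_index b0 (size p) a.
  have hash_tflip b' s :
      hash (rstring_of (tflip c t)) b' 0 s = hash (flip_coin c (rstring_of t)) b' 0 s.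
    by apply: eq_hash => k z _; apply/rstring_of_tflip/coin_index_lt.
  rewrite /diff !hash_tflip def_x def_y /c -[size p]add0n !hash_flip_coin.
  by rewrite eqxx (eq_sym a') (negbTE neq_a) andbT andbF addFb addbA.
pose Q := [set t : N.-tuple bool | ~~ diff true t].
have card_Q : 2 * #|Q| <= 2 ^ N.
  have -> : 2 ^ N = #|[set: N.-tuple bool]| by rewrite cardsT card_tuple card_bool.
  apply: (@leq_double_card _ _ _ (tflip (coin_index true (size p) a))).
  - exact: can_inj (tflipK _).
  - exact: subsetT.
  - by move=> t; rewrite !inE diff_tflip /= negbK andbT.
have -> : fingerprint_collisions N x y = [set t in Q | ~~ diff false t].
  apply/setP => t; rewrite !inE /fingerprint /diff !negb_add !eqseq_cons andbT.
  exact: andbC.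
apply: leq_trans card_Q; rewrite -[4]/(2 * 2) -mulnA leq_mul2l /=.
apply: (@leq_double_card _ _ _ (tflip (coin_index false (size p) a))).
- exact: can_inj (tflipK _).
- by apply/subsetP => t; rewrite inE => /andP [].
- by move=> t; rewrite !inE !diff_tflip /= => /andP [-> ->].
Qed.

Lemma fingerprint_separates (x y : seq Sigma) :
  size x = size y -> x != y ->
  prob_at_least (fun r => fingerprint r x != fingerprint r y) (3 / 4).
Proof.
move=> size_xy neq_xy; set N := (size x * #|Sigma|).*2.
exists N, (~: fingerprint_collisions N x y); split.
  move=> t; rewrite !inE => sep_t r r_t.
  have eq_r i : i < N -> r i = rstring_of t i.
    by move=> i_lt; rewrite (r_t (Ordinal i_lt)) (tnth_nth false).
  by rewrite !(eq_fingerprint eq_r) // -size_xy.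
have := card_fingerprint_collisions size_xy neq_xy; rewrite -/N -(ler_nat rat) natrM.
have := cardsC (fingerprint_collisions N x y).
rewrite card_tuple card_bool => /(congr1 (GRing.natmul (1 : rat))).
rewrite natrD; lra.
Qed.

End Fingerprint.

Definition checkpoint (i : nat) : nat := if i is i'.+1 then 2 ^ 2 ^ i' else 1.

Lemma checkpoint_gt0 i : 0 < checkpoint i.
Proof. by case: i => //= i; rewrite expn_gt0. Qed.

Lemma pred_checkpoint_leq_sqr l i0 :
  (forall i, i < i0 -> checkpoint i <= l) -> (checkpoint i0).-1 <= l ^ 2.
Proof.
case: i0 => [|i] le_l //; apply: (@leq_trans (checkpoint i ^ 2)).
  by case: i {le_l} => //= i; rewrite -expnM -expnSr leq_pred.
by rewrite leq_sqr le_l.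
Qed.

(* Round [i] occupies messages [2 i] (Alice) and [2 i + 1] (Bob, whose empty
   reply means "continue"); both parties read [i] off the transcript length. *)
Definition squaring_protocol (Sigma : finType) : protocol Sigma :=
  Protocol
    (fun A r t => let m := checkpoint (size t)./2 in
       if size A < m then None else Some (fingerprint r (take m A)))
    (fun B r t => let m := checkpoint (size t)./2 in
       if (size B < m) || (fingerprint r (take m B) != last [::] t) then None
       else Some [::])
    (fun _ t => (checkpoint (size t)./2).-1).

Section SquaringRun.

Variables (Sigma : finType) (A B : seq Sigma) (r : rstring).

Local Notation run_sq := (run_from (squaring_protocol Sigma) A B r).

Fixpoint agreed_transcript (k : nat) : transcript :=
  if k is k'.+1 then
    agreed_transcript k' ++ [:: fingerprint r (take (checkpoint k') A); [::]]
  else [::].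

Lemma size_agreed_transcript k : size (agreed_transcript k) = k.*2.
Proof. by elim: k => //= k IH; rewrite size_cat IH addn2. Qed.

Lemma comm_agreed_transcript k : comm (agreed_transcript k) = k.*2.
Proof. by elim: k => //= k IH; rewrite /comm map_cat sumn_cat -/(comm _) IH /=; lia. Qed.

Definition round_passes (i : nat) : bool :=
  let m := checkpoint i in
  [&& m <= size A, m <= size B & fingerprint r (take m A) == fingerprint r (take m B)].

Lemma run_round_passes f i :
  checkpoint i <= lcp A B ->
  run_sq f.+2 (agreed_transcript i) = run_sq f (agreed_transcript i.+1).
Proof.
move=> le_lcp; rewrite /= size_agreed_transcript odd_double doubleK.
rewrite ltnNge (leq_trans le_lcp (lcp_leq_size_l A B)) /=.
rewrite size_rcons size_agreed_transcript /= uphalf_double last_rcons.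
rewrite ltnNge (leq_trans le_lcp (lcp_leq_size_r A B)) (take_lcp le_lcp) eqxx /=.
by rewrite odd_double /= -!cats1 -catA.
Qed.

Lemma run_rounds_pass f k :
  (forall i, i < k -> checkpoint i <= lcp A B) ->
  run_sq (f + k.*2) [::] = run_sq f (agreed_transcript k).
Proof.
elim: k f => [|k IH] f le_lcp; first by rewrite addn0.
rewrite doubleS -addSnnS -addSnnS IH => [|i i_lt]; last by apply/le_lcp/ltnW.
exact/run_round_passes/le_lcp.
Qed.

Lemma run_round_fails f i :
  ~~ round_passes i ->
  exists t, [/\ run_sq f.+2 (agreed_transcript i) = Some t,
                comm t <= i.*2.+2 & (size t)./2 = i].
Proof.
rewrite /round_passes /= size_agreed_transcript odd_double doubleK.
case: ltnP => [_ _|size_A /=].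
  exists (agreed_transcript i).
  by rewrite comm_agreed_transcript size_agreed_transcript doubleK; split=> //; lia.
rewrite size_rcons size_agreed_transcript /= uphalf_double last_rcons.
rewrite ltnNge eq_sym => fails; rewrite odd_double /= -negb_and fails.
exists (rcons (agreed_transcript i) (fingerprint r (take (checkpoint i) A))).
rewrite size_rcons size_agreed_transcript /= uphalf_double -cats1 /comm map_cat sumn_cat.
by rewrite -/(comm _) comm_agreed_transcript /=; split=> //; lia.
Qed.

Lemma squaring_good i0 R :
  (forall i, i < i0 -> checkpoint i <= lcp A B) -> lcp A B < checkpoint i0 ->
  i0.*2.+2 <= R -> ~~ round_passes i0 ->
  good (squaring_protocol Sigma) A B r R R
       (fun l' => lcp A B <= l' <= lcp A B ^ 2).
Proof.
move=> le_lcp lcp_lt R_ge fails; rewrite /good /run.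
have -> : R.+1 = (R.+1 - i0.*2 - 2).+2 + i0.*2 by lia.
rewrite run_rounds_pass //.
have [t [-> comm_t half_t]] := run_round_fails (R.+1 - i0.*2 - 2) fails.
exists t; split=> //; split; first by lia.
rewrite /= half_t pred_checkpoint_leq_sqr // andbT.
by have := checkpoint_gt0 i0; lia.
Qed.

End SquaringRun.

Lemma squaring_search (Sigma : finType) (A B : seq Sigma) :
  let g := lg (lg (lcp A B)) in
  prob_at_least
    (fun r => good (squaring_protocol Sigma) A B r (6 * g.+1) (6 * g.+1)
                   (fun l' => lcp A B <= l' <= lcp A B ^ 2)) (3 / 4).
Proof.
move=> g; set l := lcp A B.
have ex_exceeds : exists i, l < checkpoint i by exists g.+2; apply: ltn_exp2_lglg.
have [i0 lt_i0 min_i0] := ex_minnP ex_exceeds.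
have le_l i : i < i0 -> checkpoint i <= l.
  by move=> lt_i; rewrite leqNgt; apply/negP => /min_i0; lia.
have i0_le : i0 <= g.+2 by apply/min_i0/ltn_exp2_lglg.
have good_r r : ~~ round_passes A B r i0 -> good (squaring_protocol Sigma) A B r
    (6 * g.+1) (6 * g.+1) (fun l' => l <= l' <= l ^ 2).
  by apply: squaring_good => //; lia.
have [/andP [size_A size_B]|too_short] :=
  boolP ((checkpoint i0 <= size A) && (checkpoint i0 <= size B)); last first.
  apply: prob_at_least_sure => // r; apply: good_r.
  by apply: contra too_short => /and3P [-> ->].
set m := checkpoint i0 in size_A size_B good_r.
have size_take : size (take m A) = size (take m B) by rewrite !size_takel.
have neq_take : take m A != take m B.
  by apply/eqP => /(leq_lcp size_A size_B); rewrite leqNgt lt_i0.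
apply: prob_at_least_sub (fingerprint_separates size_take neq_take) => r sep.
by apply: good_r; rewrite /round_passes -/m size_A size_B (negbTE sep).
Qed.

Theorem lemma9 (Sigma : finType) :
  (* (1) l <= l' <= l^2 with O(lg lg l) rounds and O(lg lg l) communication *)
  (exists (P : protocol Sigma) (C : nat) (p : rat), (1 / 2 < p)%R /\
     forall A B : seq Sigma,
       prob_at_least
         (fun r => good P A B r (C * (lg (lg (lcp A B))).+1)
                              (C * (lg (lg (lcp A B))).+1)
                              (fun l' => lcp A B <= l' <= lcp A B ^ 2)) p)
  /\
  (* (2) l <= l' <= |A|^2 with O(1) rounds and O(lg lg lg |A|) communication *)
  (exists (P : protocol Sigma) (C : nat) (p : rat), (1 / 2 < p)%R /\
     forall A B : seq Sigma,
       prob_at_least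
         (fun r => good P A B r C
                              (C * (lg (lg (lg (size A)))).+1)
                              (fun l' => lcp A B <= l' <= size A ^ 2)) p).
Proof.
split.
- exists (squaring_protocol Sigma), 6, (3 / 4)%R; split; first by [].
  exact: squaring_search.
- exists (one_message_protocol Sigma), 3, 1%R; split; first by [].
  by move=> A B; apply: prob_at_least_sure => // r; apply: one_message_good.
Qed.
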